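(* Let $S$ be a ring, $R$ a noetherian $S$-algebra, $\boldsymbol a=(a_1,\dots,a_n)$ and $\boldsymbol b=(b_1,\dots,b_n)$ sequences in $R$ with $\boldsymbol b$ regular, and $W=\sum_ia_ib_i$. Let $F=\bigoplus_iR\theta_i$, $\delta_+=(\sum_ib_i\theta_i^* )\lrcorner(-)$, $\delta_-=(\sum_ia_i\theta_i)\wedge(-)$ on $\bigwedge F$, and $\pi:(\bigwedge F,\delta_+)\to R/(\boldsymbol b)$ the projection onto $\bigwedge^0F=R$ followed by the quotient map. Suppose given an $S$-linear morphism of complexes $\sigma:R/(\boldsymbol b)\to(\bigwedge F,\delta_+)$ and an $S$-linear map $h$ on $\bigwedge F$ of degree $-1$ with $\delta_+h+h\delta_+=1-\sigma\pi$, $h^2=0$ and $h\sigma=0$. Let $X$ be a finite-rank matrix factorisation of $V\in R$ over $R$ such that $V+W$ lies in the image of the structure map $S\to R$; extend $h,\sigma$ to $S$-linear maps on/between $X\otimes_R\bigwedge F$ and $X\otimes_RR/(\boldsymbol b)$ using a homogeneous $R$-basis of $X$ (with Koszul signs), and set $\mu=d_X\otimes1+1\otimes\delta_-$ and $\sigma_\infty=\sum_{m\ge0}(-1)^m(h\mu)^m\sigma$. Then there is a deformation retract datum of linear factorisations of $V+W$ over $S$ $$(X\otimes_RR/(\boldsymbol b),\,d_X\otimes1)\ \underset{1\otimes\pi}{\overset{\sigma_\infty}{\rightleftarrows}}\ (X\otimes_R\textstyle\bigwedge F,\,1\otimes\delta_++\mu),\qquad h_\infty .$$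
   Context: A linear factorisation of $U$ over a ring $T$ is a $\mathbb{Z}_2$-graded $T$-module (not necessarily free) with an odd $T$-linear differential squaring to multiplication by $U$; morphisms are even maps commuting with the differentials. The symbols $\theta_i$ have odd degree (cohomological degree $-1$), so $\bigwedge F$ is $\mathbb{Z}$-graded with $\delta_\pm$ of degree $\pm1$; $(\bigwedge F,\delta_+)$ is the Koszul complex of $\boldsymbol b$. A deformation retract datum consists of morphisms of linear factorisations $\iota:M\to L$ (here $\sigma_\infty$) and $p:L\to M$ (here $1\otimes\pi$) with $p\iota=1_M$, together with an odd map $h_\infty$ on $L$ with $d_Lh_\infty+h_\infty d_L=1-\iota p$. *)

From HB Require Import structures.
From mathcomp Require Import all_boot all_order all_algebra.
Set Implicit Arguments. Unset Strict Implicit. Unset Printing Implicit Defensive.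
Import Order.TTheory GRing.Theory.
Local Open Scope ring_scope.

Section Defs.
Variable R : comNzRingType.

Definition is_ideal (I : R -> Prop) :=
  [/\ I 0, (forall x y, I x -> I y -> I (x + y)) & (forall r x, I x -> I (r * x))].

Definition noetherian :=
  forall I : nat -> R -> Prop, (forall k, is_ideal (I k)) ->
    (forall k x, I k x -> I k.+1 x) ->
    exists k0, forall k x, (k0 <= k)%N -> I k x -> I k0 x.

Definition in_ideal_gen n (b : 'I_n -> R) (P : pred 'I_n) (x : R) :=
  exists c : 'I_n -> R, x = \sum_(j | P j) c j * b j.

Definition in_ideal n (b : 'I_n -> R) (x : R) := in_ideal_gen b predT x.

Definition regular_seq n (b : 'I_n -> R) :=
  (forall (i : 'I_n) (x : R),
      in_ideal_gen b (fun j => (j < i)%N) (b i * x) ->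
      in_ideal_gen b (fun j => (j < i)%N) x)
  /\ ~ in_ideal b 1.

(** The exterior algebra /\F of F = (+)_i R theta_i, in the basis
    theta_J = theta_{j1} /\ ... /\ theta_{jk} (j1 < ... < jk), J a subset. *)
Definition ext n := {ffun {set 'I_n} -> R}.

(** /\^k F : homogeneous elements of exterior degree k
    (cohomological degree -k). *)
Definition hom_deg n (k : nat) (w : ext n) := forall J : {set 'I_n}, #|J| != k -> w J = 0.

Definition ksign n (i : 'I_n) (J : {set 'I_n}) : R :=
  (-1) ^+ #|[set j in J | (j < i)%N]|.

Definition wedge n (i : 'I_n) (w : ext n) : ext n :=
  [ffun J : {set 'I_n} => if i \in J then ksign i (J :\ i) * w (J :\ i) else 0].

Definition contr n (i : 'I_n) (w : ext n) : ext n :=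
  [ffun J : {set 'I_n} => if i \in J then 0 else ksign i J * w (i |: J)].

Definition delta_plus n (b : 'I_n -> R) (w : ext n) : ext n :=
  [ffun J : {set 'I_n} => \sum_i b i * contr i w J].

Definition delta_minus n (a : 'I_n -> R) (w : ext n) : ext n :=
  [ffun J : {set 'I_n} => \sum_i a i * wedge i w J].

(** X (x) /\F, where X is free with homogeneous basis e_0..e_{N-1}
    (parities par), coordinates w.r.t. the basis e_i (x) theta_J. *)
Definition KX N n := {ffun 'I_N * {set 'I_n} -> R}.

(** X (x)_R R : coordinates w.r.t. e_i; X (x)_R R/(b) is represented by
    lifts (two lifts define the same element iff they agree mod (b)). *)
Definition XR N := {ffun 'I_N -> R}.

Definition psign (e : bool) : R := if e then -1 else 1.

Definition rowx N n (x : KX N n) (i : 'I_N) : ext n := [ffun J : {set 'I_n} => x (i, J)].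

Definition kpar N n (par : 'I_N -> bool) (k : 'I_N * {set 'I_n}) : bool :=
  par k.1 (+) odd #|k.2|.

Definition dXR N (dX : 'M[R]_N) (z : XR N) : XR N :=
  [ffun i => \sum_j dX i j * z j].

Definition dX1 N n (dX : 'M[R]_N) (x : KX N n) : KX N n :=
  [ffun k => \sum_j dX k.1 j * x (j, k.2)].

(** 1 (x) f for an odd map f on /\F (Koszul sign (-1)^{|e_i|}). *)
Definition one_odd N n (par : 'I_N -> bool) (f : ext n -> ext n) (x : KX N n) : KX N n :=
  [ffun k => psign (par k.1) * f (rowx x k.1) k.2].

Definition mu N n (par : 'I_N -> bool) (dX : 'M[R]_N) (a : 'I_n -> R) (x : KX N n) : KX N n :=
  dX1 dX x + one_odd par (delta_minus a) x.

Definition Dtot N n (par : 'I_N -> bool) (dX : 'M[R]_N) (a b : 'I_n -> R)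
  (x : KX N n) : KX N n :=
  one_odd par (delta_plus b) x + mu par dX a x.

(** 1 (x) sigma (sigma given by an S-linear lift R -> /\F vanishing on (b)) *)
Definition one_sig N n (sigma : R -> ext n) (z : XR N) : KX N n :=
  [ffun k => sigma (z k.1) k.2].

(** 1 (x) pi, lifted: projection onto /\^0 F = R (then reduce mod (b)). *)
Definition one_pi N n (x : KX N n) : XR N := [ffun i => x (i, set0)].

End Defs.

(** sigma_oo = sum_{m>=0} (-1)^m (h mu)^m sigma ; the terms with m > n vanish
    since h mu raises the exterior degree, so the sum is taken over m <= n. *)
Definition sigma_inf (S : comNzRingType) (R : comAlgType S) N n (par : 'I_N -> bool)
  (dX : 'M[R]_N) (a : 'I_n -> R) (h : ext R n -> ext R n) (sigma : R -> ext R n)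
  (z : XR R N) : KX R N n :=
  \sum_(m < n.+1)
     ((-1) ^+ m : S) *: iter m (fun x => one_odd par h (mu par dX a x)) (@one_sig R N n sigma z).

Definition par_map (T1 T2 : finType) (R : comNzRingType) (p1 : T1 -> bool) (p2 : T2 -> bool)
  (oddf : bool) (f : {ffun T1 -> R} -> {ffun T2 -> R}) :=
  forall (e : bool) (x : {ffun T1 -> R}), (forall k, p1 k != e -> x k = 0) ->
     forall k, p2 k != (e (+) oddf) -> f x k = 0.

(* The data (sigma, pi, h) exhibit R/(b) as a strong deformation retract of the Koszul
   complex, and tensoring with X (Koszul signs) gives one of (X (x) R/(b), d_X (x) 1) inside
   (X (x) /\F, 1 (x) delta_+).  The full differential D = 1 (x) delta_+ + mu is a perturbation
   of 1 (x) delta_+, and the perturbation lemma applies with the Neumann series of A = h mu,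
   which is finite because A raises the exterior degree.  Everything then follows from the
   single identity (1 + A) D = delta_+ (1 + A) + (V + W) h + sigma pi mu, obtained from
   D^2 = V + W (a scalar of S) and the homotopy relation, together with h^2 = 0, h sigma = 0,
   pi h = 0 and pi mu sigma = d_X modulo (b).  Noetherianity and regularity only serve, in
   the paper, to construct sigma and h; here they are given. *)

From HB Require Import structures.
From mathcomp Require Import all_boot all_order all_algebra.
From mathcomp.algebra_tactics Require Import ring.
Set Implicit Arguments. Unset Strict Implicit. Unset Printing Implicit Defensive.
Import Order.TTheory GRing.Theory.
Local Open Scope ring_scope.

Lemma sumr_antisym (V : zmodType) n (f : 'I_n -> 'I_n -> V) :
  (forall i j, f i j = - f j i) -> (forall i, f i i = 0) -> \sum_i \sum_j f i j = 0.
Proof.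
move=> f_anti f_diag; pose g (i j : 'I_n) := if (i < j)%N then f i j else 0.
have fE i j : f i j = g i j - g j i.
  rewrite /g; case: ltngtP => [_|_|/val_inj ->]; by rewrite ?f_diag ?subr0 ?sub0r ?subrr.
under eq_bigr => i _ do under eq_bigr => j _ do rewrite fE.
under eq_bigr => i _ do rewrite sumrB.
by rewrite sumrB [X in _ - X]exchange_big subrr.
Qed.

Section ExteriorAlgebra.
Variables (R : comNzRingType) (n : nat).
Implicit Types (i j : 'I_n) (J : {set 'I_n}) (w : ext R n).

Lemma psign_ltn i j : i != j -> psign R (i < j)%N = - psign R (j < i)%N.
Proof. by rewrite /psign; case: ltngtP => [| |/val_inj ->]; rewrite ?opprK ?eqxx. Qed.

Lemma psign_sq e : psign R e * psign R e = 1.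
Proof. by case: e; rewrite /psign ?mulrNN mulr1. Qed.

Lemma psignN e : psign R (~~ e) = - psign R e.
Proof. by case: e; rewrite /psign ?opprK. Qed.

Lemma ksign_sq i J : ksign R i J * ksign R i J = 1.
Proof. by rewrite -expr2 sqrr_sign. Qed.

Lemma ksignU1 i j J : j \notin J -> ksign R i (j |: J) = psign R (j < i)%N * ksign R i J.
Proof.
move=> jJ; rewrite /ksign /psign; case: ltnP => ji.
  have -> : [set x in j |: J | (x < i)%N] = j |: [set x in J | (x < i)%N].
    by apply/setP => x; rewrite !inE; case: eqP => [->|] //=; rewrite ji.
  by rewrite cardsU1 inE (negbTE jJ) /= exprS.
have -> : [set x in j |: J | (x < i)%N] = [set x in J | (x < i)%N].
  apply/setP => x; rewrite !inE; case: eqP => [->|] //=.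
  by rewrite ltnNge ji (negbTE jJ).
by rewrite mul1r.
Qed.

Lemma ksignD1 i j J : j \in J -> ksign R i J = psign R (j < i)%N * ksign R i (J :\ j).
Proof. by move=> jJ; rewrite -ksignU1 ?setD11 // setD1K. Qed.

Lemma ksignD1_id i J : ksign R i (J :\ i) = ksign R i J.
Proof.
rewrite /ksign; suff -> : [set x in J :\ i | (x < i)%N] = [set x in J | (x < i)%N] by [].
by apply/setP => x; rewrite !inE; case: (x =P i) => [->|]; rewrite ?ltnn ?andbF.
Qed.

Lemma contr_anticomm i j w J : contr i (contr j w) J = - contr j (contr i w) J.
Proof.
rewrite !ffunE !inE; have [<-|ij] := eqVneq j i.
  by rewrite /=; case: ifP; rewrite ?mulr0 ?oppr0.
rewrite /=; case iJ: (i \in J); case jJ: (j \in J); rewrite ?mulr0 ?oppr0 //.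
rewrite (ksignU1 _ (negbT iJ)) (ksignU1 _ (negbT jJ)) [j |: (i |: J)]setUCA.
by rewrite (psign_ltn ij); ring.
Qed.

Lemma wedge_anticomm i j w J : wedge i (wedge j w) J = - wedge j (wedge i w) J.
Proof.
rewrite !ffunE !inE; have [<-|ij] := eqVneq j i.
  by rewrite /=; case: ifP; rewrite ?mulr0 ?oppr0.
rewrite /=; case iJ: (i \in J); case jJ: (j \in J); rewrite ?mulr0 ?oppr0 //.
have jJi : j \in J :\ i by rewrite !inE ij.
have iJj : i \in J :\ j by rewrite !inE eq_sym ij.
rewrite (ksignD1 i jJi) (ksignD1 j iJj) [J :\ j :\ i]setDDl setUC -setDDl.
by rewrite (psign_ltn ij); ring.
Qed.

Lemma contr_wedge i j w J :
  contr i (wedge j w) J + wedge j (contr i w) J = if i == j then w J else 0.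
Proof.
rewrite !ffunE !inE; have [<-|ij] := eqVneq i j.
  rewrite /=; case iJ: (i \in J); rewrite ?mulr0 ?add0r ?addr0 mulrA.
    by rewrite ksignD1_id ksign_sq mul1r setD1K.
  by rewrite setU1K ?iJ // ksign_sq mul1r.
rewrite /=; case iJ: (i \in J); case jJ: (j \in J); rewrite ?mulr0 ?addr0 ?add0r //.
have iJj : i \notin J :\ j by rewrite !inE iJ andbF.
have -> : (i |: J) :\ j = i |: (J :\ j).
  by apply/setP => x; rewrite !inE; case: (x =P i) => // ->; rewrite ij.
rewrite (ksignD1 i jJ) (ksignU1 j iJj) (psign_ltn ij).
have := psign_sq (j < i)%N; move: (psign _ _) => s s2.
transitivity ((1 - s * s) * (ksign R i (J :\ j) * ksign R j (J :\ j) * w (i |: J :\ j))).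
  by ring.
by rewrite s2 subrr mul0r.
Qed.

(* [R] is not canonically an [R]-module (over a [comAlgType S] it is an [S]-module), so
   R-linearity of operators on [ext R n] is stated by hand. *)
Definition ext_Rlinear (f : ext R n -> ext R n) :=
  forall (I : finType) (c : I -> R) (u : I -> ext R n),
    f [ffun J => \sum_k c k * u k J] = [ffun J => \sum_k c k * f (u k) J].

(* [delta_plus b] and [delta_minus a] are, by definition, [ext_comb b contr] and
   [ext_comb a wedge]. *)
Definition ext_comb (c : 'I_n -> R) (f : 'I_n -> ext R n -> ext R n) w : ext R n :=
  [ffun J => \sum_i c i * f i w J].

Lemma contr_Rlinear i : ext_Rlinear (contr i).
Proof.
move=> I c u; apply/ffunP => J; rewrite !ffunE; case: ifP => iJ.
  by rewrite big1 // => k _; rewrite ffunE iJ mulr0.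
by rewrite mulr_sumr; apply: eq_bigr => k _; rewrite ffunE iJ mulrCA.
Qed.

Lemma wedge_Rlinear i : ext_Rlinear (wedge i).
Proof.
move=> I c u; apply/ffunP => J; rewrite !ffunE; case: ifP => iJ.
  by rewrite mulr_sumr; apply: eq_bigr => k _; rewrite ffunE iJ mulrCA.
by rewrite big1 // => k _; rewrite ffunE iJ mulr0.
Qed.

Lemma ext_comb_Rlinear c f : (forall i, ext_Rlinear (f i)) -> ext_Rlinear (ext_comb c f).
Proof.
move=> f_lin I d u; apply/ffunP => J; rewrite !ffunE.
under eq_bigr => i _ do rewrite f_lin ffunE mulr_sumr.
rewrite exchange_big; apply: eq_bigr => k _; rewrite ffunE mulr_sumr.
by apply: eq_bigr => i _; rewrite mulrCA.
Qed.

Lemma ext_RlinearN f w : ext_Rlinear f -> f (- w) = - f w.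
Proof.
move=> f_lin; have oppE (v : ext R n) : - v = [ffun J => \sum_(k < 1) (-1) * v J].
  by apply/ffunP => J; rewrite !ffunE big_ord1 mulN1r.
by rewrite !oppE f_lin; apply/ffunP => J; rewrite !ffunE !big_ord1.
Qed.

Lemma ext_RlinearD f u v : ext_Rlinear f -> f (u + v) = f u + f v.
Proof.
move=> f_lin; have addE (u' v' : ext R n) :
    u' + v' = [ffun J => \sum_(k : bool) 1 * (if k then u' else v') J].
  by apply/ffunP => J; rewrite !ffunE big_bool /= !mul1r addrC.
by rewrite !addE f_lin; apply/ffunP => J; rewrite !ffunE !big_bool /=.
Qed.

Lemma delta_plus_Rlinear b : ext_Rlinear (delta_plus b).
Proof. exact: ext_comb_Rlinear contr_Rlinear. Qed.

Lemma delta_minus_Rlinear a : ext_Rlinear (delta_minus a).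
Proof. exact: ext_comb_Rlinear wedge_Rlinear. Qed.


Lemma ext_comb_sq c f w :
  (forall i, ext_Rlinear (f i)) ->
  (forall i j w J, f i (f j w) J = - f j (f i w) J) ->
  (forall i w J, f i (f i w) J = 0) ->
  ext_comb c f (ext_comb c f w) = 0.
Proof.
move=> f_lin f_anti f_sq; apply/ffunP => J; rewrite [LHS]ffunE ffunE.
under eq_bigr => i _ do rewrite f_lin ffunE mulr_sumr.
by apply: sumr_antisym => [i j|i]; rewrite ?f_sq ?mulr0 // f_anti; ring.
Qed.

Lemma contr_sq i w J : contr i (contr i w) J = 0.
Proof. by rewrite !ffunE !inE eqxx /=; case: ifP; rewrite ?mulr0. Qed.

Lemma wedge_sq i w J : wedge i (wedge i w) J = 0.
Proof. by rewrite !ffunE !inE eqxx /=; case: ifP; rewrite ?mulr0. Qed.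

Lemma delta_plus_sq b w : delta_plus b (delta_plus b w) = 0.
Proof. exact: ext_comb_sq contr_Rlinear contr_anticomm contr_sq. Qed.

Lemma delta_minus_sq a w : delta_minus a (delta_minus a w) = 0.
Proof. exact: ext_comb_sq wedge_Rlinear wedge_anticomm wedge_sq. Qed.

Lemma delta_plus_minus a b w J :
  delta_plus b (delta_minus a w) J + delta_minus a (delta_plus b w) J =
  (\sum_i a i * b i) * w J.
Proof.
rewrite !ffunE.
under eq_bigr => i _ do rewrite contr_Rlinear ffunE mulr_sumr.
under [X in _ + X = _]eq_bigr => i _ do rewrite wedge_Rlinear ffunE mulr_sumr.
rewrite [X in _ + X = _]exchange_big -big_split /= mulr_suml.
apply: eq_bigr => i _; rewrite -big_split /= (bigD1 i) //= big1 ?addr0.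
  by have := contr_wedge i i w J; rewrite eqxx => <-; ring.
move=> j ij; have := contr_wedge i j w J; rewrite eq_sym (negbTE ij) => CAR.
transitivity (b i * a j * (contr i (wedge j w) J + wedge j (contr i w) J)); first by ring.
by rewrite CAR mulr0.
Qed.

Definition ext_odd (f : ext R n -> ext R n) := forall (e : bool) w,
  (forall J, odd #|J| != e -> w J = 0) -> forall J, odd #|J| != ~~ e -> f w J = 0.

Lemma contr_odd i : ext_odd (contr i).
Proof.
move=> e w wP J JP; rewrite ffunE; case: ifP => iJ //.
by rewrite wP ?mulr0 // cardsU1 iJ /=; case: e JP {wP}; case: (odd _).
Qed.

Lemma wedge_odd i : ext_odd (wedge i).
Proof.
move=> e w wP J JP; rewrite ffunE; case: ifP => iJ //.
rewrite wP ?mulr0 //; move: JP; rewrite (cardsD1 i J) iJ /=.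
by case: e {wP}; case: (odd _).
Qed.

Lemma ext_comb_odd c f : (forall i, ext_odd (f i)) -> ext_odd (ext_comb c f).
Proof.
by move=> f_odd e w wP J JP; rewrite ffunE big1 // => i _; rewrite (f_odd i e w) ?mulr0.
Qed.

Lemma delta_plus_odd b : ext_odd (delta_plus b).
Proof. exact: ext_comb_odd contr_odd. Qed.

Lemma delta_minus_odd a : ext_odd (delta_minus a).
Proof. exact: ext_comb_odd wedge_odd. Qed.

Definition hom_part (l : nat) w : ext R n := [ffun J : {set 'I_n} => if #|J| == l then w J else 0].

Lemma hom_part_deg l w : hom_deg l (hom_part l w).
Proof. by move=> J /negbTE JL; rewrite ffunE JL. Qed.

Lemma sum_hom_part w : w = \sum_(l < n.+1) hom_part l w.
Proof.
have card_le J : (#|J| < n.+1)%N by rewrite ltnS -[X in (_ <= X)%N]card_ord max_card.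
apply/ffunP => J; rewrite sum_ffunE (bigD1 (Ordinal (card_le J))) //= ffunE eqxx.
rewrite big1 ?addr0 // => l lJ; rewrite ffunE; case: eqP => // JE.
by move: lJ; rewrite -val_eqE /= JE eqxx.
Qed.

Lemma deg_raising_eq0 (f : {additive ext R n -> ext R n}) (P : pred nat) w J :
  (forall k v, hom_deg k v -> hom_deg k.+1 (f v)) ->
  (forall K : {set 'I_n}, ~~ P #|K| -> w K = 0) -> (forall l, P l -> #|J| != l.+1) ->
  f w J = 0.
Proof.
move=> f_deg wP JP; rewrite (sum_hom_part w) raddf_sum sum_ffunE big1 // => l _.
have [Pl|nPl] := boolP (P l); first exact: f_deg _ _ (hom_part_deg w) _ (JP l Pl).
suff -> : hom_part l w = 0 by rewrite raddf0 ffunE.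
by apply/ffunP => K; rewrite !ffunE; case: eqP => // KE; rewrite wP // KE.
Qed.

End ExteriorAlgebra.

Section ParityMaps.
Variables (R : comNzRingType) (T1 T2 T3 : finType).
Variables (p1 : T1 -> bool) (p2 : T2 -> bool) (p3 : T3 -> bool).

Lemma par_map_add o (f g : {ffun T1 -> R} -> {ffun T2 -> R}) :
  par_map p1 p2 o f -> par_map p1 p2 o g -> par_map p1 p2 o (fun t => f t + g t).
Proof. by move=> fP gP e t tP k kP; rewrite ffunE (fP e t tP k kP) (gP e t tP k kP) addr0. Qed.

Lemma par_map_comp o1 o2 (f : {ffun T1 -> R} -> {ffun T2 -> R})
    (g : {ffun T2 -> R} -> {ffun T3 -> R}) :
  par_map p1 p2 o1 f -> par_map p2 p3 o2 g -> par_map p1 p3 (o1 (+) o2) (fun t => g (f t)).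
Proof. by move=> fP gP e t tP k kP; apply: (gP (e (+) o1)); [exact: fP | rewrite -addbA]. Qed.

End ParityMaps.

Section TensorWithX.
Variables (R : comNzRingType) (N n : nat) (par : 'I_N -> bool) (dX : 'M[R]_N).
Hypothesis dX_odd : forall i j, par i = par j -> dX i j = 0.
Implicit Types (x y : KX R N n) (f g : ext R n -> ext R n).

Lemma one_odd_comp f g x : {morph f : u / - u} ->
  one_odd par f (one_odd par g x) = [ffun k => f (g (rowx x k.1)) k.2].
Proof.
move=> fN; apply/ffunP => -[i J]; rewrite !ffunE /=.
have -> : rowx (one_odd par g x) i = if par i then - g (rowx x i) else g (rowx x i).
  by apply/ffunP => K; rewrite !ffunE /psign; case: (par i); rewrite ?ffunE ?mulN1r ?mul1r.
by rewrite /psign; case: (par i); rewrite ?fN ?mulN1r ?ffunE ?opprK ?mul1r.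
Qed.

Lemma one_odd_add f x y : {morph f : u v / u + v} ->
  one_odd par f (x + y) = one_odd par f x + one_odd par f y.
Proof.
move=> fD; apply/ffunP => -[i J]; rewrite !ffunE /=.
have -> : rowx (x + y) i = rowx x i + rowx y i by apply/ffunP => K; rewrite !ffunE.
by rewrite fD ffunE mulrDr.
Qed.

Lemma dX1_add x y : dX1 dX (x + y) = dX1 dX x + dX1 dX y.
Proof.
apply/ffunP => k; rewrite !ffunE -big_split; apply: eq_bigr => j _ /=.
by rewrite ffunE mulrDr.
Qed.

Lemma dX1_one_odd_anticomm f x : ext_Rlinear f ->
  dX1 dX (one_odd par f x) + one_odd par f (dX1 dX x) = 0.
Proof.
move=> f_lin; apply/ffunP => -[i J]; rewrite !ffunE /=.
have -> : rowx (dX1 dX x) i = [ffun K => \sum_j dX i j * rowx x j K].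
  by apply/ffunP => K; rewrite !ffunE; apply: eq_bigr => j _; rewrite ffunE.
rewrite f_lin ffunE mulr_sumr -big_split big1 // => j _ /=; rewrite ffunE /=.
have [pij|pij] := eqVneq (par i) (par j); first by rewrite dX_odd // !mul0r mulr0 addr0.
have -> : par j = ~~ par i by move: pij; case: (par i); case: (par j).
by rewrite psignN; ring.
Qed.

Lemma scalar_square_sum V (u : 'I_N -> R) i : dX *m dX = V%:M ->
  \sum_j dX i j * \sum_l dX j l * u l = V * u i.
Proof.
move=> dX_sq; under eq_bigr => j _ do rewrite mulr_sumr.
rewrite exchange_big /=.
have mulmxE l : \sum_j dX i j * (dX j l * u l) = (dX *m dX) i l * u l.
  by rewrite mxE mulr_suml; apply: eq_bigr => j _; rewrite mulrA.
under eq_bigr => l _ do rewrite mulmxE dX_sq mxE.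
rewrite (bigD1 i) //= eqxx mulr1n big1 ?addr0 // => l li.
by rewrite eq_sym (negbTE li) mulr0n mul0r.
Qed.

Lemma dXR_sq V (z : XR R N) i : dX *m dX = V%:M -> dXR dX (dXR dX z) i = V * z i.
Proof.
move=> dX_sq; rewrite -(scalar_square_sum z i dX_sq) ffunE.
by apply: eq_bigr => j _; rewrite ffunE.
Qed.

Lemma Dtot_sq (a b : 'I_n -> R) V x : dX *m dX = V%:M ->
  Dtot par dX a b (Dtot par dX a b x) = [ffun k => (V + \sum_i a i * b i) * x k].
Proof.
move=> dX_sq; rewrite /Dtot /mu.
set P := one_odd par (delta_plus b); set M := dX1 dX; set Q := one_odd par (delta_minus a).
have PD u v : P (u + v) = P u + P v.
  by apply: one_odd_add => ? ?; apply: ext_RlinearD; apply: delta_plus_Rlinear.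
have QD u v : Q (u + v) = Q u + Q v.
  by apply: one_odd_add => ? ?; apply: ext_RlinearD; apply: delta_minus_Rlinear.
have PN u : delta_plus b (- u) = - delta_plus b u by apply/ext_RlinearN/delta_plus_Rlinear.
have QN u : delta_minus a (- u) = - delta_minus a u.
  by apply/ext_RlinearN/delta_minus_Rlinear.
have PP : P (P x) = 0.
  by rewrite /P one_odd_comp //; apply/ffunP => k; rewrite ffunE delta_plus_sq !ffunE.
have QQ : Q (Q x) = 0.
  by rewrite /Q one_odd_comp //; apply/ffunP => k; rewrite ffunE delta_minus_sq !ffunE.
have MM : M (M x) = [ffun k => V * x k].
  apply/ffunP => -[i J]; rewrite !ffunE /=.
  rewrite -[RHS](scalar_square_sum (fun j => x (j, J)) i dX_sq).
  by apply: eq_bigr => j _; rewrite ffunE.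
have PM : P (M x) = - M (P x).
  by apply/eqP; rewrite -subr_eq0 opprK addrC dX1_one_odd_anticomm //; apply: delta_plus_Rlinear.
have QM : Q (M x) = - M (Q x).
  by apply/eqP; rewrite -subr_eq0 opprK addrC dX1_one_odd_anticomm //; apply: delta_minus_Rlinear.
have QP : Q (P x) = [ffun k => (\sum_i a i * b i) * x k] - P (Q x).
  apply/eqP; rewrite eq_sym subr_eq addrC; apply/eqP; rewrite /P /Q !one_odd_comp //.
  apply/ffunP => k; have CAR := delta_plus_minus a b (rowx x k.1) k.2.
  by rewrite !ffunE in CAR *; rewrite CAR -surjective_pairing.
rewrite !PD !QD /M !dX1_add -/M PP QQ MM PM QM QP.
by apply/ffunP => k; rewrite !ffunE; ring.
Qed.

Lemma one_odd_par f : ext_odd f -> par_map (kpar par) (kpar par) true (one_odd par f).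
Proof.
move=> f_odd e x xP [i J] kP; rewrite ffunE /= (f_odd (e (+) par i) (rowx x i)) ?mulr0 //.
  move=> K KP; rewrite ffunE xP //; move: KP; rewrite /kpar /=.
  by case: (par i); case: (odd _); case: e {xP kP}.
by move: kP; rewrite /kpar /=; case: (par i); case: (odd _); case: e {xP}.
Qed.

Lemma dX1_par : par_map (kpar (n:=n) par) (kpar par) true (dX1 dX).
Proof.
move=> e x xP [i J] kP; rewrite ffunE big1 // => j _ /=.
have [pij|pij] := eqVneq (par j) (par i); first by rewrite dX_odd ?mul0r.
rewrite xP ?mulr0 //; move: pij kP; rewrite /kpar /=.
by case: (par i); case: (par j); case: (odd _); case: e {xP}.
Qed.

Lemma dXR_par : par_map par par true (dXR dX).
Proof.
move=> e z zP i iP; rewrite ffunE big1 // => j _.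
have [pij|pij] := eqVneq (par j) (par i); first by rewrite dX_odd ?mul0r.
by rewrite zP ?mulr0 //; move: pij iP; case: (par i); case: (par j); case: e {zP}.
Qed.

Lemma one_pi_par : par_map (kpar (n:=n) par) par false (@one_pi R N n).
Proof.
move=> e x xP i iP; rewrite ffunE xP //; move: iP; rewrite /kpar /= cards0 /=.
by case: (par i); case: e {xP}.
Qed.

Lemma mu_par (a : 'I_n -> R) : par_map (kpar par) (kpar par) true (mu par dX a).
Proof. exact: par_map_add dX1_par (one_odd_par (delta_minus_odd a)). Qed.

Lemma Dtot_par (a b : 'I_n -> R) : par_map (kpar par) (kpar par) true (Dtot par dX a b).
Proof. exact: par_map_add (one_odd_par (delta_plus_odd b)) (mu_par a). Qed.

End TensorWithX.

Section NeumannSeries.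
Variables (S : pzRingType) (V : lmodType S) (A : {linear V -> V}) (k : nat).
Hypothesis A_nil : forall x, iter k.+1 A x = 0.

Definition neumann x := \sum_(m < k.+1) (-1) ^+ m *: iter m A x.

Lemma neumann_is_linear : linear neumann.
Proof.
move=> c x y; rewrite /neumann scaler_sumr -big_split; apply: eq_bigr => m _ /=.
have iterP u v : iter m A (c *: u + v) = c *: iter m A u + iter m A v.
  by elim: (nat_of_ord m) => //= m' ->; rewrite linearP.
by rewrite iterP scalerDr !scalerA (commr_sign c m).
Qed.

HB.instance Definition _ := GRing.isLinear.Build S V V _ neumann neumann_is_linear.

Lemma neumann_telescope y :
  neumann y + \sum_(m < k.+1) (-1) ^+ m *: iter m.+1 A y = y.
Proof.
rewrite /neumann big_ord_recl big_ord_recr A_nil /= scaler0 addr0 expr0 scale1r.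
rewrite -addrA -big_split big1 ?addr0 // => m _ /=.
by rewrite /bump leq0n add0n add1n exprS mulN1r scaleNr addNr.
Qed.

Lemma neumannK y : neumann (y + A y) = y.
Proof.
rewrite linearD -[RHS](neumann_telescope y); congr (_ + _).
by apply: eq_bigr => m _; rewrite -iterSr.
Qed.

Lemma neumannKV y : neumann y + A (neumann y) = y.
Proof.
rewrite -[RHS](neumann_telescope y); congr (_ + _).
by rewrite linear_sum; apply: eq_bigr => m _; rewrite linearZ -iterS.
Qed.

End NeumannSeries.

Section ScalarLinearity.
Variables (S : comNzRingType) (R : comAlgType S) (N n : nat) (par : 'I_N -> bool).

Lemma ext_Rlinear_linear (f : ext R n -> ext R n) : ext_Rlinear f -> linear f.
Proof.
move=> f_lin c u v; have combE (u' v' : ext R n) :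
    c *: u' + v' = [ffun J => \sum_(k : bool) (if k then c%:A else 1) * (if k then u' else v') J].
  by apply/ffunP => J; rewrite !ffunE big_bool /= mul1r mulr_algl.
by rewrite !combE f_lin; apply/ffunP => J; rewrite !ffunE !big_bool /= mul1r mulr_algl.
Qed.

HB.instance Definition _ (b : 'I_n -> R) := GRing.isLinear.Build S (ext R n) (ext R n) _
  (delta_plus b) (ext_Rlinear_linear (delta_plus_Rlinear b)).
HB.instance Definition _ (a : 'I_n -> R) := GRing.isLinear.Build S (ext R n) (ext R n) _
  (delta_minus a) (ext_Rlinear_linear (delta_minus_Rlinear a)).

Lemma rowxP (c : S) (x y : KX R N n) i : rowx (c *: x + y) i = c *: rowx x i + rowx y i.
Proof. by apply/ffunP => J; rewrite !ffunE. Qed.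

Lemma one_odd_is_linear (f : {linear ext R n -> ext R n}) : linear (one_odd par f).
Proof.
move=> c x y; apply/ffunP => -[i J]; rewrite !ffunE /= rowxP linearP !ffunE.
by rewrite mulrDr scalerAr.
Qed.

HB.instance Definition _ (f : {linear ext R n -> ext R n}) :=
  GRing.isLinear.Build S (KX R N n) (KX R N n) _ (one_odd par f) (one_odd_is_linear f).

Lemma dX1_is_linear (dX : 'M[R]_N) : linear (@dX1 R N n dX).
Proof.
move=> c x y; apply/ffunP => k; rewrite !ffunE scaler_sumr -big_split.
by apply: eq_bigr => j _ /=; rewrite !ffunE mulrDr scalerAr.
Qed.

HB.instance Definition _ (dX : 'M[R]_N) :=
  GRing.isLinear.Build S (KX R N n) (KX R N n) _ (dX1 dX) (dX1_is_linear dX).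

Lemma mu_is_linear (dX : 'M[R]_N) (a : 'I_n -> R) : linear (mu par dX a).
Proof. by move=> c x y; rewrite /mu !linearP scalerDr addrACA. Qed.

HB.instance Definition _ (dX : 'M[R]_N) (a : 'I_n -> R) :=
  GRing.isLinear.Build S (KX R N n) (KX R N n) _ (mu par dX a) (mu_is_linear dX a).

Lemma one_sig_is_linear (sigma : {linear R -> ext R n}) : linear (@one_sig R N n sigma).
Proof. by move=> c z z'; apply/ffunP => k; rewrite !ffunE linearP !ffunE. Qed.

HB.instance Definition _ (sigma : {linear R -> ext R n}) :=
  GRing.isLinear.Build S (XR R N) (KX R N n) _ (one_sig sigma) (one_sig_is_linear sigma).

Lemma one_pi_is_linear : linear (@one_pi R N n).
Proof. by move=> c x y; apply/ffunP => i; rewrite !ffunE. Qed.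

HB.instance Definition _ :=
  GRing.isLinear.Build S (KX R N n) (XR R N) _ (@one_pi R N n) one_pi_is_linear.

End ScalarLinearity.

Section IdealMembership.
Variables (R : comNzRingType) (n : nat) (b : 'I_n -> R).

Lemma in_ideal0 : in_ideal b 0.
Proof. by exists (fun _ => 0); rewrite big1 // => l _; rewrite mul0r. Qed.

Lemma in_idealD x y : in_ideal b x -> in_ideal b y -> in_ideal b (x + y).
Proof.
move=> [c ->] [d ->]; exists (fun l => c l + d l).
by rewrite -big_split; apply: eq_bigr => l _; rewrite mulrDl.
Qed.

Lemma in_idealMl r x : in_ideal b x -> in_ideal b (r * x).
Proof.
move=> [c ->]; exists (fun l => r * c l).
by rewrite mulr_sumr; apply: eq_bigr => l _; rewrite mulrA.
Qed.

Lemma in_ideal_lincomb (I : finType) (r x : I -> R) :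
  (forall k, in_ideal b (x k)) -> in_ideal b (\sum_k r k * x k).
Proof.
move=> xI; apply: (big_ind (in_ideal b)) => [||k _]; first exact: in_ideal0.
  exact: in_idealD.
exact/in_idealMl/xI.
Qed.

Lemma delta_plus_set0_ideal w : in_ideal b (delta_plus b w set0).
Proof.
by exists (fun l => contr l w set0); rewrite ffunE; apply: eq_bigr => l _; rewrite mulrC.
Qed.

End IdealMembership.

Section Perturbation.
Variables (S : comNzRingType) (R : comAlgType S) (n : nat) (a b : 'I_n -> R).
Variables (sigma : R -> ext R n) (h : ext R n -> ext R n).
Hypothesis sigma_lin : linear sigma.
Hypothesis sigma_wd : forall x, in_ideal b x -> sigma x = 0.
Hypothesis sigma_deg : forall x, hom_deg 0 (sigma x).
Hypothesis sigma_chain : forall x, delta_plus b (sigma x) = 0.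
Hypothesis h_lin : linear h.
Hypothesis h_deg : forall (k : nat) (w : ext R n), hom_deg k w -> hom_deg k.+1 (h w).
Hypothesis h_htpy : forall w, delta_plus b (h w) + h (delta_plus b w) = w - sigma (w set0).
Hypothesis h_sq : forall w, h (h w) = 0.
Hypothesis h_sig : forall x, h (sigma x) = 0.
Variables (N : nat) (par : 'I_N -> bool) (dX : 'M[R]_N) (V : R) (s : S).
Hypothesis dX_odd : forall i j, par i = par j -> dX i j = 0.
Hypothesis dX_sq : dX *m dX = V%:M.
Hypothesis VW : V + \sum_i a i * b i = s%:A.

HB.instance Definition _ := GRing.isLinear.Build S (ext R n) (ext R n) _ h h_lin.
HB.instance Definition _ := GRing.isLinear.Build S R (ext R n) _ sigma sigma_lin.

Local Notation hX := (one_odd par h).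
Local Notation dplusX := (one_odd par (delta_plus b)).
Local Notation muX := (mu par dX a).
Local Notation D := (Dtot par dX a b).
Local Notation sigX := (@one_sig R N n sigma).
Local Notation piX := (@one_pi R N n).

Definition perturb x := hX (muX x).

Lemma perturb_is_linear : linear perturb.
Proof. by move=> c x y; rewrite /perturb !linearP. Qed.

HB.instance Definition _ :=
  GRing.isLinear.Build S (KX R N n) (KX R N n) _ perturb perturb_is_linear.

Lemma h_set0 w : h w set0 = 0.
Proof. by apply: (deg_raising_eq0 (P := predT)) => // l _; rewrite cards0. Qed.

Lemma h_odd : ext_odd h.
Proof.
move=> e w wP J JP; apply: (deg_raising_eq0 (P := fun l => odd l == e)) => // l /eqP le.
by apply/eqP => Jl; move: JP; rewrite Jl /= le; case: e {wP le}.
Qed.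

Lemma hX_sq x : hX (hX x) = 0.
Proof.
rewrite one_odd_comp; last exact: raddfN.
by apply/ffunP => k; rewrite ffunE h_sq !ffunE.
Qed.

Lemma dplusX_sq x : dplusX (dplusX x) = 0.
Proof.
rewrite one_odd_comp; last exact: raddfN.
by apply/ffunP => k; rewrite ffunE delta_plus_sq !ffunE.
Qed.

Lemma rowx_one_sig z i : rowx (sigX z) i = sigma (z i).
Proof. by apply/ffunP => J; rewrite !ffunE. Qed.

Lemma hX_sigX z : hX (sigX z) = 0.
Proof. by apply/ffunP => -[i J]; rewrite [LHS]ffunE /= rowx_one_sig h_sig !ffunE mulr0. Qed.

Lemma dplusX_sigX z : dplusX (sigX z) = 0.
Proof. by apply/ffunP => -[i J]; rewrite [LHS]ffunE /= rowx_one_sig sigma_chain !ffunE mulr0. Qed.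

Lemma hX_htpy x : dplusX (hX x) + hX (dplusX x) = x - sigX (piX x).
Proof.
rewrite !one_odd_comp; try exact: raddfN.
apply/ffunP => -[i J].
have := congr1 (fun w : ext R n => w J) (h_htpy (rowx x i)).
by rewrite !ffunE /= => ->.
Qed.

Lemma piX_hX x : piX (hX x) = 0.
Proof. by apply/ffunP => i; rewrite !ffunE h_set0 mulr0. Qed.

Lemma piX_muX x : piX (muX x) = dXR dX (piX x).
Proof.
apply/ffunP => i; have wedge_set0 w : \sum_l a l * wedge l w set0 = 0.
  by rewrite big1 // => l _; rewrite ffunE inE mulr0.
by rewrite !ffunE /= wedge_set0 mulr0 addr0; apply: eq_bigr => j _; rewrite ffunE.
Qed.

Lemma piX_muX_hX x : piX (muX (hX x)) = 0.
Proof.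
rewrite piX_muX piX_hX; apply/ffunP => i.
by rewrite !ffunE big1 // => j _; rewrite ffunE mulr0.
Qed.

Lemma piX_dplusX_ideal x i : in_ideal b (piX (dplusX x) i).
Proof.
exists (fun l => psign R (par i) * contr l (rowx x i) set0).
by rewrite !ffunE /= mulr_sumr; apply: eq_bigr => l _; rewrite mulrCA mulrC.
Qed.

Definition vanish_below m (x : KX R N n) := forall k : 'I_N * {set 'I_n}, (#|k.2| < m)%N -> x k = 0.

Lemma muX_vanish m x : vanish_below m x -> vanish_below m (muX x).
Proof.
move=> xm [i J] /= Jm; rewrite !ffunE /= big1 ?add0r => [|j _]; last by rewrite xm ?mulr0.
rewrite big1 ?mulr0 // => l _; rewrite ffunE; case: ifP => lJ; last by rewrite mulr0.
rewrite ffunE xm ?mulr0 //= (leq_ltn_trans _ Jm) //.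
by rewrite (cardsD1 l J) lJ.
Qed.

Lemma hX_vanish m x : vanish_below m x -> vanish_below m.+1 (hX x).
Proof.
move=> xm [i J] /= Jm; rewrite ffunE /= (deg_raising_eq0 (P := fun l => (m <= l)%N)) ?mulr0 //.
  by move=> K; rewrite -ltnNge => Km; rewrite ffunE xm.
by move=> l ml; rewrite neq_ltn ltnS (leq_trans _ ml) // -ltnS.
Qed.

Lemma perturb_nilpotent x : iter n.+1 perturb x = 0.
Proof.
have iter_vanish m : vanish_below m (iter m perturb x).
  by elim: m => [|m IH] //=; apply/hX_vanish/muX_vanish.
apply/ffunP => -[i J]; rewrite iter_vanish ?ffunE // ltnS -[X in (_ <= X)%N]card_ord.
exact: max_card.
Qed.

Local Notation T := (neumann perturb n).

Lemma neumann_perturbE y : T y = y - perturb (T y).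
Proof. by rewrite -[X in X - _](neumannKV perturb_nilpotent y) addrK. Qed.

Lemma hX_neumann y : hX (T y) = hX y.
Proof. by rewrite neumann_perturbE linearB /= hX_sq subr0. Qed.

Lemma piX_neumann y : piX (T y) = piX y.
Proof. by rewrite neumann_perturbE linearB /= piX_hX subr0. Qed.

Lemma piX_muX_neumann y : piX (muX (T y)) = piX (muX y).
Proof. by rewrite neumann_perturbE !linearB /= piX_muX_hX subr0. Qed.

Lemma Dtot_sqZ y : D (D y) = s *: y.
Proof. by rewrite (Dtot_sq dX_odd _ _ _ dX_sq) VW; apply/ffunP => k; rewrite !ffunE mulr_algl. Qed.

Lemma sigma_set0_ideal x : in_ideal b (sigma x set0 - x).
Proof.
pose w0 : ext R n := [ffun J => if J == set0 then x else 0].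
have dw0 : delta_plus b w0 = 0.
  apply/ffunP => J; rewrite !ffunE big1 // => l _; rewrite !ffunE.
  have /negbTE -> : l |: J != set0 by apply/set0Pn; exists l; apply: setU11.
  by case: ifP; rewrite !mulr0.
have E : delta_plus b (h w0) set0 = x - sigma x set0.
  have := congr1 (fun w : ext R n => w set0) (h_htpy w0); rewrite dw0 linear0 addr0 /= => ->.
  by rewrite !ffunE eqxx.
by rewrite -opprB -mulN1r -E; apply/in_idealMl/delta_plus_set0_ideal.
Qed.

Lemma sigma_congr u v : in_ideal b (u - v) -> sigma u = sigma v.
Proof. by move=> uv; apply/eqP; rewrite -subr_eq0 -linearB /= sigma_wd. Qed.

Lemma sigX_piX_muX_sigX z : sigX (piX (muX (sigX z))) = sigX (dXR dX z).
Proof.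
rewrite piX_muX; apply/ffunP => -[i J]; rewrite ![one_sig _ _ _]ffunE /=.
rewrite (@sigma_congr _ (dXR dX z i)) //; rewrite !ffunE -sumrB.
under eq_bigr => j _ do rewrite -mulrBr.
by apply: in_ideal_lincomb => j; rewrite !ffunE; apply: sigma_set0_ideal.
Qed.

Lemma perturb_Dtot y :
  D y + perturb (D y) = dplusX (y + perturb y) + hX (s *: y) + sigX (piX (muX y)).
Proof.
have DE u : D u = dplusX u + muX u by [].
have muXD : muX (D y) = s *: y - dplusX (muX y).
  have -> : dplusX (muX y) = dplusX (D y).
    by rewrite [D y]DE [RHS]linearD /= dplusX_sq add0r.
  by rewrite -Dtot_sqZ [D (D y)]DE addrAC subrr add0r.
have htpy : hX (dplusX (muX y)) = muX y - sigX (piX (muX y)) - dplusX (hX (muX y)).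
  by rewrite -hX_htpy [dplusX _ + _]addrC addrK.
rewrite /perturb muXD linearB /= htpy DE [dplusX (_ + _)]linearD /=.
move: (dplusX y) (muX y) (hX (s *: y)) (sigX _) (dplusX (hX (muX y))) => p q r t u.
by apply/ffunP => k; rewrite !ffunE; ring.
Qed.

Lemma Dtot_sigma_inf z : D (T (sigX z)) = T (sigX (dXR dX z)).
Proof.
have := perturb_Dtot (T (sigX z)).
rewrite (neumannKV perturb_nilpotent) dplusX_sigX add0r.
rewrite linearZ /= hX_neumann hX_sigX scaler0 add0r piX_muX_neumann sigX_piX_muX_sigX => E.
by rewrite -[LHS](neumannK perturb_nilpotent) E.
Qed.

Lemma Dtot_h_inf x : D (T (hX x)) + T (hX (D x)) = x - T (sigX (piX x)).
Proof.
have TK := neumannK perturb_nilpotent.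
have TKV := neumannKV perturb_nilpotent.
have E1 : D (T (hX x)) + perturb (D (T (hX x))) = dplusX (hX x).
  rewrite perturb_Dtot TKV linearZ /= hX_neumann hX_sq scaler0 addr0.
  by rewrite piX_muX_neumann piX_muX_hX linear0 addr0.
have E2 : hX (D x) = x + perturb x - sigX (piX x) - dplusX (hX x).
  rewrite [D x]/(Dtot _ _ _ _ _) linearD /= -/(perturb x).
  rewrite -[hX (dplusX x)]addr0 -(subrr (dplusX (hX x))) addrA [_ + dplusX (hX x)]addrC hX_htpy.
  move: (perturb x) (sigX _) (dplusX _) => p q r.
  by apply/ffunP => k; rewrite !ffunE; ring.
rewrite -[LHS]TK [X in _ + X]linearD /= addrACA E1 TKV E2.
by rewrite addrC subrK linearB /= TK.
Qed.

Local Notation sinf := (sigma_inf par dX a h sigma).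

Lemma perturb_par : par_map (kpar par) (kpar par) false perturb.
Proof. exact: par_map_comp (mu_par dX_odd a) (one_odd_par h_odd). Qed.

Lemma neumann_par : par_map (kpar par) (kpar par) false T.
Proof.
move=> e x xP k kP; rewrite sum_ffunE big1 // => m _; rewrite ffunE.
suff -> : iter m perturb x k = 0 by rewrite scaler0.
elim: (nat_of_ord m) k kP => [|m' IH] k kP /=; first by apply: xP; rewrite addbF in kP.
by apply: (perturb_par (e := e)) => // k' kP'; apply: IH; rewrite addbF.
Qed.

Lemma one_sig_par : par_map par (kpar par) false sigX.
Proof.
move=> e z zP [i J] kP; rewrite ffunE /=.
have [J0|J0] := eqVneq J set0; last by apply: (sigma_deg (z i)); rewrite cards_eq0.
rewrite zP ?linear0 ?ffunE //; move: kP; rewrite /kpar /= J0 cards0 /=.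
by case: (par i); case: e {zP}.
Qed.

Lemma sigma_infE (z : XR R N) : sinf z = T (sigX z).
Proof. by []. Qed.

Lemma sigma_inf_linear : linear sinf.
Proof. by move=> c z z'; rewrite !sigma_infE !linearP. Qed.

Lemma sigma_inf_ideal (z : XR R N) : (forall i, in_ideal b (z i)) -> sinf z = 0.
Proof.
move=> zI; rewrite !sigma_infE; suff -> : sigX z = 0 by rewrite linear0.
by apply/ffunP => k; rewrite !ffunE (sigma_wd (zI k.1)) ffunE.
Qed.

Lemma sigma_inf_par : par_map par (kpar par) false sinf.
Proof. exact: par_map_comp one_sig_par neumann_par. Qed.

Lemma piX_sigma_inf_ideal (z : XR R N) i : in_ideal b (piX (sinf z) i - z i).
Proof. by rewrite !sigma_infE piX_neumann ffunE ffunE; apply: sigma_set0_ideal. Qed.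

Lemma piX_Dtot_ideal x i : in_ideal b (piX (D x) i - dXR dX (piX x) i).
Proof.
rewrite [D x]/(Dtot _ _ _ _ _) linearD /= piX_muX ffunE addrK.
exact: piX_dplusX_ideal.
Qed.

Lemma dXR_sq_ideal (z : XR R N) i : in_ideal b (dXR dX (dXR dX z) i - (V + \sum_l a l * b l) * z i).
Proof.
rewrite (dXR_sq _ _ dX_sq) mulrDl opprD addrA subrr add0r.
exists (fun l => - (a l * z i)); rewrite mulr_suml -sumrN.
by apply: eq_bigr => l _; rewrite mulrAC mulNr.
Qed.

Definition h_inf x := T (hX x).

Lemma h_inf_linear : linear h_inf.
Proof. by move=> c x y; rewrite /h_inf !linearP. Qed.

Lemma h_inf_par : par_map (kpar par) (kpar par) true h_inf.
Proof. exact: par_map_comp (one_odd_par h_odd) neumann_par. Qed.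

End Perturbation.

Theorem propositionD1 (S : comNzRingType) (R : comAlgType S) (n : nat)
  (a b : 'I_n -> R)
  (Rnoeth : noetherian R) (breg : regular_seq b)
  (sigma : R -> ext R n) (h : ext R n -> ext R n)
  (sigma_lin : linear sigma)
  (sigma_wd : forall x, in_ideal b x -> sigma x = 0)
  (sigma_deg : forall x, hom_deg 0 (sigma x))
  (sigma_chain : forall x, delta_plus b (sigma x) = 0)
  (h_lin : linear h)
  (h_deg : forall (k : nat) (w : ext R n), hom_deg k w -> hom_deg k.+1 (h w))
  (h_htpy : forall w, delta_plus b (h w) + h (delta_plus b w) = w - sigma (w set0))
  (h_sq : forall w, h (h w) = 0)
  (h_sig : forall x, h (sigma x) = 0)
  (N : nat) (par : 'I_N -> bool) (dX : 'M[R]_N) (V : R)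
  (dX_odd : forall i j, par i = par j -> dX i j = 0)
  (dX_sq : dX *m dX = V%:M)
  (VW : exists s : S, V + \sum_i a i * b i = s%:A) :
  let W := \sum_i a i * b i in
  let D := Dtot par dX a b in
  let sinf := sigma_inf par dX a h sigma in
  (* (X (x) /\F, 1 (x) delta_+ + mu) is a linear factorisation of V + W *)
  par_map (kpar par) (kpar par) true D /\
  (forall x : KX R N n, D (D x) = [ffun k => (V + W) * x k]) /\
  (* (X (x) R/(b), d_X (x) 1) is a linear factorisation of V + W *)
  par_map par par true (dXR dX) /\
  (forall (z : XR R N) i, in_ideal b (dXR dX (dXR dX z) i - (V + W) * z i)) /\
  (* sigma_oo : well-defined S-linear even morphism *)
  linear sinf /\
  (forall z : XR R N, (forall i, in_ideal b (z i)) -> sinf z = 0) /\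
  par_map par (kpar par) false sinf /\
  (forall z : XR R N, D (sinf z) = sinf (dXR dX z)) /\
  (* 1 (x) pi : even morphism *)
  par_map (kpar par) par false (@one_pi R N n) /\
  (forall (x : KX R N n) i, in_ideal b (one_pi (D x) i - dXR dX (one_pi x) i)) /\
  (* p iota = 1 on X (x) R/(b) *)
  (forall (z : XR R N) i, in_ideal b (one_pi (sinf z) i - z i)) /\
  (* the homotopy h_oo *)
  exists hinf : KX R N n -> KX R N n,
    linear hinf /\ par_map (kpar par) (kpar par) true hinf /\
    (forall x : KX R N n, D (hinf x) + hinf (D x) = x - sinf (one_pi x)).
Proof.
case: VW => s VWs W D sinf.
split; first exact: Dtot_par.
split; first by move=> x; apply: Dtot_sq; eassumption.
split; first exact: dXR_par.
split; first by move=> z i; apply: dXR_sq_ideal; eassumption.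
split; first by apply: sigma_inf_linear; eassumption.
split; first by move=> z; apply: sigma_inf_ideal; eassumption.
split; first by apply: sigma_inf_par; eassumption.
split; first by move=> z; apply: Dtot_sigma_inf; eassumption.
split; first exact: one_pi_par.
split; first by move=> x i; apply: piX_Dtot_ideal.
split; first by move=> z i; apply: piX_sigma_inf_ideal; eassumption.
exists (h_inf a h_lin par dX); split; first by apply: h_inf_linear; eassumption.
split; first by apply: h_inf_par; eassumption.
by move=> x; apply: Dtot_h_inf; eassumption.
Qed.
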